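(* For every equivalence class $[i]\in I/\sim$, the subspace $V_{[i]}=\bigoplus_{i'\in[i]}\mathbb F v_{i'}$ is a $k$-submodule of $\mathbb V$.
   Context: Fix integers $n\ge 2$ and $1\le k\le n$ and an arbitrary field $\mathbb F$; $S_n$ denotes the symmetric group on $n$ letters. A $k$-module over a linear space $\mathbb W$ is an $\mathbb F$-vector space $\mathbb V$ (the dimensions of $\mathbb V$ and $\mathbb W$ are arbitrary, possibly infinite) together with, for every $\sigma\in S_n$, an $n$-linear map $\mathbb V^k\times\mathbb W^{n-k}\to\mathbb V$, $(x_1,\dots,x_k,y_{k+1},\dots,y_n)\mapsto[x_1,\dots,x_k,y_{k+1},\dots,y_n]_\sigma$ (interpreted as an $n$-ary bracket in which the $l$-th argument is placed in position $\sigma(l)$). A $k$-submodule of $\mathbb V$ is a linear subspace $U$ such that $[u,x_2,\dots,x_k,y_{k+1},\dots,y_n]_\sigma\in U$ for all $\sigma\in S_n$, $u\in U$, $x_l\in\mathbb V$, $y_l\in\mathbb W$. Fix a basis $\mathfrak B'=\{w_j\}_{j\in J}$ of $\mathbb W$. A basis $\mathfrak B=\{v_i\}_{i\in I}$ of $\mathbb V$ is multiplicative (with respect to $\mathfrak B'$) if for all $\sigma\in S_n$, $i_1,\dots,i_k\in I$, $j_{k+1},\dots,j_n\in J$, the element $[v_{i_1},\dots,v_{i_k},w_{j_{k+1}},\dots,w_{j_n}]_\sigma$ lies in $\mathbb F v_r$ for some $r\in I$. Throughout, $\mathbb V$ is a $k$-module over $\mathbb W$ with a multiplicative basis $\mathfrak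 B=\{v_i\}_{i\in I}$ with respect to $\mathfrak B'=\{w_j\}_{j\in J}$. Index machinery: let $\overline I=\{\overline i:i\in I\}$ and $\overline J=\{\overline j:j\in J\}$ be sets of new symbols disjoint from $I$ and $J$, with the convention $\overline{\overline x}=x$; for a tuple $X=(x_2,\dots,x_k)$ put $\overline X=(\overline x_2,\dots,\overline x_k)$, similarly for $Y$. For $\sigma\in S_n$, $i_1,\dots,i_k\in I$, $j_{k+1},\dots,j_n\in J$, let $a_\sigma(i_1,\dots,i_k,j_{k+1},\dots,j_n)=\emptyset$ if $[v_{i_1},\dots,v_{i_k},w_{j_{k+1}},\dots,w_{j_n}]_\sigma=0$ and $=\{r\}$ if this bracket is a nonzero element of $\mathbb F v_r$. For $i,i_2,\dots,i_k\in I$, $j_{k+1},\dots,j_n\in J$ let $b_\sigma(i,\overline i_2,\dots,\overline i_k,\overline j_{k+1},\dots,\overline j_n)=\{i'\in I: a_\sigma(i',i_2,\dots,i_k,j_{k+1},\dots,j_n)=\{i\}\}$. For $i\in I$, $X=(x_2,\dots,x_k)\in(I\,\dot\cup\,\overline I)^{k-1}$, $Y=(y_{k+1},\dots,y_n)\in(J\,\dot\cup\,\overline J)^{n-k}$ define $\mu(i,X,Y)\subseteq I$ by: $\mu(i,X,Y)=\bigcup_{\sigma\in S_n}a_\sigma(i,X,Y)$ if all $x_l\in I$ and all $y_l\in J$; $\mu(i,X,Y)=\bigcup_{\sigma\in S_n}b_\sigma(i,X,Y)$ if all $x_l\in\overline I$ and all $y_l\in\overline J$; and $\mu(i,X,Y)=\emptyset$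 otherwise. For $\mathfrak A\subseteq I$ set $\phi(\mathfrak A,X,Y)=\bigcup_{i\in\mathfrak A}\mu(i,X,Y)$. Connections: for distinct $i,i'\in I$, a connection from $i$ to $i'$ is a finite sequence $(X_1,Y_1,\dots,X_t,Y_t)$, $t\ge1$, with $X_m\in(I\,\dot\cup\,\overline I)^{k-1}$ and $Y_m\in(J\,\dot\cup\,\overline J)^{n-k}$, such that, setting $\mathfrak A_0=\{i\}$ and $\mathfrak A_m=\phi(\mathfrak A_{m-1},X_m,Y_m)$, one has $\mathfrak A_m\neq\emptyset$ for $1\le m\le t-1$ and $i'\in\mathfrak A_t$. We say $i$ is connected to $i'$ if such a connection exists; by convention every $i\in I$ is connected to itself. This relation, written $i\sim i'$, is an equivalence relation on $I$; $[i]$ denotes the class of $i$ and $I/\sim$ the set of classes. *)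

From HB Require Import structures.
From mathcomp Require Import all_boot all_order all_algebra all_fingroup.
Set Implicit Arguments. Unset Strict Implicit. Unset Printing Implicit Defensive.
Import GRing.Theory.
Local Open Scope ring_scope.

(* Convention: the paper's k (with 1 <= k <= n) is written k1.+1, i.e. k1 = k - 1.
   The V-arguments x_1..x_k are indexed by 'I_k1.+1 (index 0 is x_1),
   the W-arguments y_{k+1}..y_n are indexed by 'I_(n - k1.+1). *)

Section KModules.
Variables (F : fieldType) (V W : lmodType F) (n k1 : nat).

Definition bracket := 'S_n -> ('I_k1.+1 -> V) -> ('I_(n - k1.+1) -> W) -> V.

Definition upd {T : Type} {m : nat} (f : 'I_m -> T) (l : 'I_m) (u : T) : 'I_m -> T :=
  fun j => if j == l then u else f j.

Definition multilinear (br : bracket) : Prop :=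
  forall s x y,
    (forall (l : 'I_k1.+1) (a : F) (u u' : V),
        br s (upd x l (a *: u + u')) y = a *: br s (upd x l u) y + br s (upd x l u') y) /\
    (forall (l : 'I_(n - k1.+1)) (a : F) (u u' : W),
        br s x (upd y l (a *: u + u')) = a *: br s x (upd y l u) + br s x (upd y l u')).

Definition in_span {U : lmodType F} {I : Type} (P : I -> Prop) (v : I -> U) (u : U) : Prop :=
  exists (m : nat) (f : 'I_m -> I) (c : 'I_m -> F),
    (forall t, P (f t)) /\ u = \sum_(t < m) c t *: v (f t).

Definition lin_indep {U : lmodType F} {I : Type} (v : I -> U) : Prop :=
  forall (m : nat) (f : 'I_m -> I) (c : 'I_m -> F),
    injective f -> \sum_(t < m) c t *: v (f t) = 0 -> forall t, c t = 0.

Definition is_basis {U : lmodType F} {I : Type} (v : I -> U) : Prop :=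
  lin_indep v /\ forall u, in_span (fun _ => True) v u.

Variables (I J : Type) (v : I -> V) (w : J -> W).

Definition multiplicative (br : bracket) : Prop :=
  forall s (ii : 'I_k1.+1 -> I) (jj : 'I_(n - k1.+1) -> J),
    exists (r : I) (c : F), br s (fun l => v (ii l)) (fun l => w (jj l)) = c *: v r.

Definition consI (i : I) (X : 'I_k1 -> I) : 'I_k1.+1 -> I :=
  fun l => match unlift ord0 l with None => i | Some m => X m end.

Definition a_rel (br : bracket) s (ii : 'I_k1.+1 -> I) (jj : 'I_(n - k1.+1) -> J) (r : I) : Prop :=
  br s (fun l => v (ii l)) (fun l => w (jj l)) <> 0 /\
  exists c : F, br s (fun l => v (ii l)) (fun l => w (jj l)) = c *: v r.

(* i' \in b_sigma(i, Xbar, Ybar)  iff  a_sigma(i', X, Y) = {i} *)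
Definition b_rel (br : bracket) s (i : I) (X : 'I_k1 -> I) (Y : 'I_(n - k1.+1) -> J) (i' : I) : Prop :=
  a_rel br s (consI i' X) Y i.

(* The symbols of Ibar (resp. Jbar) are encoded as inr. *)
Definition mu (br : bracket) (i : I) (X : 'I_k1 -> I + I) (Y : 'I_(n - k1.+1) -> J + J) (r : I) : Prop :=
  exists s : 'S_n,
    (exists X0 Y0, (forall l, X l = inl (X0 l)) /\ (forall l, Y l = inl (Y0 l)) /\
                   a_rel br s (consI i X0) Y0 r) \/
    (exists X0 Y0, (forall l, X l = inr (X0 l)) /\ (forall l, Y l = inr (Y0 l)) /\
                   b_rel br s i X0 Y0 r).

Definition phi (br : bracket) (A : I -> Prop) X Y (r : I) : Prop :=
  exists i, A i /\ mu br i X Y r.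

Definition iter_phi (br : bracket) (A : I -> Prop)
  (cs : seq (('I_k1 -> I + I) * ('I_(n - k1.+1) -> J + J))) : I -> Prop :=
  foldl (fun B p => phi br B p.1 p.2) A cs.

Definition is_connection (br : bracket) (i i' : I)
  (cs : seq (('I_k1 -> I + I) * ('I_(n - k1.+1) -> J + J))) : Prop :=
  i <> i' /\ (0 < size cs)%N /\
  (forall m : nat, (0 < m < size cs)%N -> exists r, iter_phi br (fun j => j = i) (take m cs) r) /\
  iter_phi br (fun j => j = i) cs i'.

Definition connected (br : bracket) (i i' : I) : Prop :=
  i = i' \/ exists cs, is_connection br i i' cs.

Definition V_class (br : bracket) (i : I) : V -> Prop :=
  in_span (fun i' => connected br i i') v.

End KModules.

Definition is_ksubmodule (F : fieldType) (V W : lmodType F) (n k1 : nat)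
  (br : bracket V W n k1) (U : V -> Prop) : Prop :=
  [/\ U 0, (forall u u', U u -> U u' -> U (u + u')),
      (forall (a : F) u, U u -> U (a *: u)) &
      forall s (x : 'I_k1.+1 -> V) (y : 'I_(n - k1.+1) -> W),
        U (x ord0) -> U (br s x y)].

(* Both V_[i] and the bracket are linear, so by multilinearity it suffices to
   bracket basis vectors v_{i'}, v_{i_2}, ..., w_{j_n} with i' ~ i.  Such a
   bracket is either 0 or a nonzero multiple of some v_r with r in
   mu(i', (i_2, ...), (j_{k+1}, ...)), and appending that one step to a
   connection from i to i' gives a connection from i to r. *)

From HB Require Import structures.
From mathcomp Require Import all_boot all_order all_algebra all_fingroup.
From Stdlib Require Import Classical FunctionalExtensionality IndefiniteDescription.
Set Implicit Arguments. Unset Strict Implicit. Unset Printing Implicit Defensive.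
Local Open Scope ring_scope.

Section Span.
Import GRing.Theory.
Variables (F : fieldType) (V : lmodType F) (I : Type) (v : I -> V).

Lemma in_span0 (P : I -> Prop) (i : I) : in_span P v 0.
Proof. by exists 0%N, (fun _ => i), (fun _ => 0); split; [case | rewrite big_ord0]. Qed.

Lemma in_spanD (P : I -> Prop) a b :
  in_span P v a -> in_span P v b -> in_span P v (a + b).
Proof.
move=> [m1 [f1 [c1 [P1 ->]]]] [m2 [f2 [c2 [P2 ->]]]].
exists (m1 + m2)%N,
  (fun t => match split t with inl x => f1 x | inr y => f2 y end),
  (fun t => match split t with inl x => c1 x | inr y => c2 y end).
split; first by move=> t; case: (split t).
rewrite big_split_ord /=; congr (_ + _); apply: eq_bigr => t _.
  by rewrite (unsplitK (inl t)).
by rewrite (unsplitK (inr t)).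
Qed.

Lemma in_spanZ (P : I -> Prop) c a : in_span P v a -> in_span P v (c *: a).
Proof.
move=> [m [f [d [Pf ->]]]]; exists m, f, (fun t => c * d t); split => //.
by rewrite scaler_sumr; apply: eq_bigr => t _; rewrite scalerA.
Qed.

Lemma in_span_scale (P : I -> Prop) c r : P r -> in_span P v (c *: v r).
Proof. by move=> Pr; exists 1%N, (fun _ => r), (fun _ => c); rewrite big_ord1. Qed.

Lemma in_span_sub (P Q : I -> Prop) u :
  (forall j, P j -> Q j) -> in_span P v u -> in_span Q v u.
Proof. by move=> PQ [m [f [c [Pf ->]]]]; exists m, f, c; split => // t; apply: PQ. Qed.

End Span.

Lemma upd_id (T : Type) (d : nat) (x : 'I_d -> T) (l : 'I_d) : upd x l (x l) = x.
Proof. by apply: functional_extensionality => j; rewrite /upd; case: eqP => [->|]. Qed.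

Section MultilinearSpan.
Import GRing.Theory.
Variables (F : fieldType) (M V : lmodType F) (K : Type) (e : K -> M) (U : V -> Prop).
Hypotheses (U0 : U 0) (UD : forall a b, U a -> U b -> U (a + b))
  (UZ : forall c a, U a -> U (c *: a)).

Lemma linear_span_closed (P : K -> Prop) (g : M -> V) :
  (forall a u u', g (a *: u + u') = a *: g u + g u') ->
  (forall j, P j -> U (g (e j))) -> forall u, in_span P e u -> U (g u).
Proof.
move=> glin ge.
have g0 : g 0 = 0.
  have g00 := glin 1 0 0; rewrite !scale1r addr0 in g00.
  by apply: (addrI (g 0)); rewrite addr0 -g00.
move=> _ [m [f [c [Pf ->]]]].
elim: m f c Pf => [|m IH] f c Pf; first by rewrite big_ord0 g0.
rewrite big_ord_recr /= addrC glin; apply: UD; first exact/UZ/ge.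
exact: (IH (fun t => f (widen_ord (leqnSn m) t)) (fun t => c (widen_ord (leqnSn m) t))).
Qed.

Variables (d : nat) (g : ('I_d -> M) -> V).
Hypothesis glin : forall x l a u u',
  g (upd x l (a *: u + u')) = a *: g (upd x l u) + g (upd x l u').

Lemma multilinear_span_closed (P : 'I_d -> K -> Prop) :
  (forall f, (forall l, P l (f l)) -> U (g (fun l => e (f l)))) ->
  forall x, (forall l, in_span (P l) e (x l)) -> U (g x).
Proof.
move=> gbasis x xspan.
(* Expand the coordinates one by one: those of index >= c are basis vectors. *)
suff expand : forall c x, (forall l : 'I_d, (l < c)%N -> in_span (P l) e (x l)) ->
    (forall l : 'I_d, (c <= l)%N -> exists2 j, P l j & x l = e j) -> U (g x).
  by apply: (expand d) => [l _ | l]; [apply: xspan | rewrite leqNgt ltn_ord].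
clear x xspan; elim=> [|c IH] x lo hi.
  have [f hf] : exists f, forall l, P l (f l) /\ x l = e (f l).
    apply: (functional_choice (fun l j => P l j /\ x l = e j)) => l.
    by have [j Pj xj] := hi l isT; exists j.
  have -> : x = (fun l => e (f l)) by apply: functional_extensionality => l; case: (hf l).
  by apply: gbasis => l; case: (hf l).
have [cd | dc] := ltnP c d; last first.
  apply: IH => [l lc | l cl]; first by apply: lo; apply: ltnW.
  by have := ltn_ord l; rewrite ltnNge (leq_trans dc cl).
pose l0 : 'I_d := Ordinal cd.
rewrite -(upd_id x l0).
apply: (linear_span_closed (g := fun u => g (upd x l0 u)) _ _ (lo l0 (ltnSn c)))
  => [a u u'|j Pj]; first exact: glin.
apply: IH => l hl; rewrite /upd; case: eqP => [el | nel].
- by move: hl; rewrite el ltnn.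
- by apply: lo; apply: ltnW.
- by exists j; rewrite // el.
- apply: hi; rewrite ltn_neqAle hl andbT; apply/eqP => cl; apply: nel.
  exact: val_inj.
Qed.

End MultilinearSpan.

Section Connections.
Variables (F : fieldType) (V W : lmodType F) (n k1 : nat) (br : bracket V W n k1)
  (I J : Type) (v : I -> V) (w : J -> W).

Lemma connected_mu i i0 X Y r :
  connected v w br i i0 -> mu v w br i0 X Y r -> connected v w br i r.
Proof.
move=> hc hmu.
case: (classic (i = r)) => [<-|ne]; first by left.
right; case: hc => [e|[cs [_ [_ [mid reach]]]]].
  subst i0; exists [:: (X, Y)]; split => //; split => //; split; first by case=> [|[]].
  by exists i.
exists (rcons cs (X, Y)); split => //; rewrite size_rcons; split => //; split.
  move=> m /andP [m0 ms]; rewrite -cats1 take_cat.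
  case: ltnP => hm; first by apply: mid; rewrite m0 hm.
  have -> : m = size cs by apply/eqP; rewrite eqn_leq hm -ltnS ms.
  by rewrite subnn take0 cats0; exists i0.
by rewrite /iter_phi -cats1 foldl_cat /=; exists i0.
Qed.

Lemma consI_head_behead (ii : 'I_k1.+1 -> I) :
  consI (ii ord0) (fun l => ii (lift ord0 l)) = ii.
Proof.
by apply: functional_extensionality => l; rewrite /consI; case: unliftP => [j ->|->].
Qed.

Lemma a_rel_mu s ii jj r :
  a_rel v w br s ii jj r ->
  mu v w br (ii ord0) (fun l => inl (ii (lift ord0 l))) (fun l => inl (jj l)) r.
Proof.
move=> har; exists s; left; exists (fun l => ii (lift ord0 l)), jj.
by rewrite consI_head_behead.
Qed.

Hypothesis hmul : multiplicative v w br.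

Lemma bracket_basis_in_class i s ii jj :
  connected v w br i (ii ord0) ->
  V_class v w br i (br s (fun l => v (ii l)) (fun l => w (jj l))).
Proof.
move=> hc; have [r [c e]] := hmul s ii jj.
case: (classic (br s (fun l => v (ii l)) (fun l => w (jj l)) = 0)) => [z|nz].
  by rewrite z; apply: in_span0.
rewrite e; apply/in_span_scale/(connected_mu hc).
apply: (a_rel_mu (s := s) (jj := jj)).
by split => //; exists c.
Qed.

End Connections.

Theorem mainTheorem5 (F : fieldType) (V W : lmodType F) (n k1 : nat)
  (hn : (2 <= n)%N) (hk : (k1.+1 <= n)%N)
  (br : bracket V W n k1) (hbr : multilinear br)
  (I J : Type) (v : I -> V) (w : J -> W)
  (hv : is_basis v) (hw : is_basis w) (hmul : multiplicative v w br) :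
  forall i : I, is_ksubmodule br (V_class v w br i).
Proof.
move=> i; have U0 := in_span0 v (connected v w br i) i.
have UD := @in_spanD _ _ _ v (connected v w br i).
have UZ := @in_spanZ _ _ _ v (connected v w br i).
split=> // s x y x0.
pose head_connected (l : 'I_k1.+1) j := l = ord0 -> connected v w br i j.
apply: (multilinear_span_closed (e := v) U0 UD UZ (g := fun x' => br s x' y)
          (fun x' l => (hbr s x' y).1 l) (P := head_connected)) => [ii hii | l].
  apply: (multilinear_span_closed (e := w) U0 UD UZ (g := br s _)
            (fun y' l => (hbr s _ y').2 l) (P := fun _ _ => True)) => [jj _ | l].
    exact/bracket_basis_in_class/hii.
  exact: hw.2.
have [->|ne] := eqVneq l ord0; first by apply: in_span_sub x0 => j ij _.
by apply: in_span_sub (hv.2 (x l)) => j _ /eqP; rewrite (negbTE ne).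
Qed.
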